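(* Let $m,m_P,m_W$ be positive integers and let $\eta^\infty=(\eta^\infty_{s,(x,\mu)})$ be a left stochastic matrix (nonnegative entries, each column summing to $1$) with row index $s\in\{1,\dots,m\}$ and column index $(x,\mu)\in\{-1,1\}^{m_W}\times\{0,1,\dots,m_P\}$, $x=(x_1,\dots,x_{m_W})$. Define the partition \[ S^P=\Big\{s:\sum_{x\in\{-1,1\}^{m_W}}\eta^\infty_{s,(x,0)}=0\Big\},\qquad S^W=\Big\{s:\sum_{x\in\{-1,1\}^{m_W}}\eta^\infty_{s,(x,0)}>0\Big\} \] of $\{1,\dots,m\}$. Then: (i) the numbers $\overline{\eta}_{s,\mu}=2^{-m_W}\sum_x\eta^\infty_{s,(x,\mu)}$, $(s,\mu)\in S^P\times\{1,\dots,m_P\}$, satisfy $0\le\overline{\eta}_{s,\mu}\le1$ for all such $(s,\mu)$ and $\sum_{s\in S^P}\overline{\eta}_{s,\mu}\le1$ for all $\mu\in\{1,\dots,m_P\}$; (ii) the singular values of the real matrix $E$ with entries \[ E_{s,\nu}=2^{-m_W/2}\,\frac{\sum_x x_{\nu-m_P}\,\eta^\infty_{s,(x,0)}}{\sqrt{\sum_x\eta^\infty_{s,(x,0)}}},\qquad (s,\nu)\in S^W\times\{m_P+1,\dots,m_P+m_W\}, \] all belong to $[0,1]$. *)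

From HB Require Import structures.
From mathcomp Require Import all_boot all_order all_algebra.
Set Implicit Arguments. Unset Strict Implicit. Unset Printing Implicit Defensive.
Import Order.TTheory GRing.Theory Num.Theory.
Local Open Scope ring_scope.

Section Defs.
Variable R : rcfType.

Definition pm1 (b : bool) : R := if b then 1 else -1.

Definition left_stochastic (m : nat) (C : finType) (eta : 'I_m -> C -> R) : Prop :=
  (forall s c, 0 <= eta s c) /\ (forall c, \sum_(s < m) eta s c = 1).

Variables (m mP mW : nat).
Notation colT := ({ffun 'I_mW -> bool} * 'I_mP.+1)%type.

Definition SP (eta : 'I_m -> colT -> R) : {set 'I_m} :=
  [set s | \sum_(x : {ffun 'I_mW -> bool}) eta s (x, ord0) == 0].
Definition SW (eta : 'I_m -> colT -> R) : {set 'I_m} :=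
  [set s | 0 < \sum_(x : {ffun 'I_mW -> bool}) eta s (x, ord0)].

Definition etabar (eta : 'I_m -> colT -> R) (s : 'I_m) (mu : 'I_mP.+1) : R :=
  (2 ^+ mW)^-1 * \sum_(x : {ffun 'I_mW -> bool}) eta s (x, mu).

(* The matrix E, rows indexed by S^W (enumerated), column j : 'I_mW standing
   for nu = mP + 1 + j, so that x_{nu - mP} = x j. *)
Definition Emx (eta : 'I_m -> colT -> R) : 'M[R]_(#|SW eta|, mW) :=
  \matrix_(i, j)
    let s := enum_val i in
    (Num.sqrt (2 ^+ mW))^-1 *
      (\sum_(x : {ffun 'I_mW -> bool}) pm1 (x j) * eta s (x, ord0)) /
      Num.sqrt (\sum_(x : {ffun 'I_mW -> bool}) eta s (x, ord0)).
End Defs.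

Definition singular_value (R : rcfType) (p q : nat) (A : 'M[R]_(p, q)) (sigma : R) : Prop :=
  0 <= sigma /\ eigenvalue (A^T *m A) (sigma ^+ 2).

From HB Require Import structures.
From mathcomp Require Import all_boot all_order all_algebra.
From mathcomp Require Import ring lra.
Set Implicit Arguments. Unset Strict Implicit.
Import Order.TTheory GRing.Theory Num.Theory.
Local Open Scope ring_scope.

(* Part (i): summing the stochastic columns over x shows that, for fixed mu,
   the numbers etabar s mu are nonnegative and sum to 1 over all s, so each
   of them and each partial sum over S^P is at most 1.
   Part (ii): it suffices that E is a contraction, |u E^T|^2 <= |u|^2.  For
   s in S^W, (E u)_s is, up to the factor 2^(-mW/2), the mean of
   f(x) = sum_j u_j x_j under the weights eta_{s,(x,0)} times the square root
   of their total mass; weighted Cauchy-Schwarz bounds its square by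
   2^-mW sum_x eta_{s,(x,0)} f(x)^2.  Summing over s and using that the
   columns of eta sum to 1 gives 2^-mW sum_x f(x)^2, which equals |u|^2 by
   the orthogonality of the characters x |-> x_j on the hypercube. *)

Section RealField.
Variable R : realFieldType.

Lemma sumr_sub_le (I : finType) (P : pred I) (F : I -> R) :
  (forall i, 0 <= F i) -> \sum_(i | P i) F i <= \sum_i F i.
Proof.
move=> F0; rewrite [X in _ <= X](bigID P) /= lerDl.
by apply: sumr_ge0 => i _.
Qed.

Lemma weighted_sqr_mean_le (I : finType) (a b : I -> R) :
  (forall i, 0 <= a i) -> 0 < \sum_i a i ->
  (\sum_i a i * b i) ^+ 2 / (\sum_i a i) <= \sum_i a i * b i ^+ 2.
Proof.
move=> a0 Apos.
set A := \sum_i a i; set B := \sum_i a i * b i; set C := \sum_i a i * b i ^+ 2.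
set t := B / A.
have var_ge0 : 0 <= \sum_i a i * (b i - t) ^+ 2.
  by apply: sumr_ge0 => i _; rewrite mulr_ge0 ?sqr_ge0.
have var_expand : \sum_i a i * (b i - t) ^+ 2 = C - t * B *+ 2 + t ^+ 2 * A.
  transitivity (\sum_i (a i * b i ^+ 2 - (t * (a i * b i)) *+ 2 + t ^+ 2 * a i)).
    by apply: eq_bigr => i _; ring.
  by rewrite big_split sumrB /= sumrMnl -!mulr_sumr.
have -> : B ^+ 2 / A = t * B *+ 2 - t ^+ 2 * A by rewrite /t; field; exact: lt0r_neq0.
lra.
Qed.

End RealField.

Lemma singular_value_le1 (R : rcfType) (p q : nat) (A : 'M[R]_(p, q)) :
  (forall u : 'rV_q, \sum_i (\sum_j u 0 j * A i j) ^+ 2 <= \sum_j u 0 j ^+ 2) ->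
  forall sigma, singular_value A sigma -> 0 <= sigma <= 1.
Proof.
move=> contractA sigma [sigma_ge0 /eigenvalueP [u eig_u u_neq0]].
rewrite sigma_ge0 -(expr_le1 (n := 2)) //.
set S := \sum_j u 0 j ^+ 2.
have form_eig : (u *m (A^T *m A) *m u^T) 0 0 = sigma ^+ 2 * S.
  rewrite eig_u -scalemxAl mxE; congr (_ * _); rewrite mxE.
  by apply: eq_bigr => j _; rewrite mxE expr2.
have form_sqr : (u *m (A^T *m A) *m u^T) 0 0 = \sum_i (\sum_j u 0 j * A i j) ^+ 2.
  rewrite mulmxA -mulmxA mxE; apply: eq_bigr => i _.
  by rewrite !mxE expr2; congr (_ * _); apply: eq_bigr => j _; rewrite !mxE // mulrC.
have S_gt0 : 0 < S.
  rewrite lt_def sumr_ge0 ?andbT; last by move=> j _; apply: sqr_ge0.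
  apply: contra u_neq0 => /eqP /psumr_eq0P u0; apply/eqP/matrixP => i j.
  rewrite (ord1 i) mxE; apply/eqP; rewrite -sqrf_eq0; apply/eqP.
  by apply: u0 => // k _; apply: sqr_ge0.
by rewrite -(ler_pM2r S_gt0) mul1r -form_eig form_sqr contractA.
Qed.

Section Hypercube.
Variable R : rcfType.

Lemma pm1N (b : bool) : pm1 R (~~ b) = - pm1 R b.
Proof. by case: b; rewrite /= ?opprK. Qed.

Lemma pm1_sqr (b : bool) : pm1 R b * pm1 R b = 1.
Proof. by case: b; rewrite /= ?mulrNN mulr1. Qed.

Lemma sum_pm1M (n : nat) (j k : 'I_n) :
  \sum_(x : {ffun 'I_n -> bool}) pm1 R (x j) * pm1 R (x k) = (j == k)%:R * 2 ^+ n.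
Proof.
have [<-|neq_jk] := eqVneq j k.
  under eq_bigr do rewrite pm1_sqr.
  by rewrite sumr_const card_ffun card_bool card_ord mul1r natrX.
rewrite mul0r; set S := (X in X = 0).
pose flip (x : {ffun 'I_n -> bool}) := [ffun i => if i == j then ~~ x i else x i].
have flipK : involutive flip.
  by move=> x; apply/ffunP => i; rewrite !ffunE; case: (i == j); rewrite ?negbK.
(* flipping the j-th coordinate changes the sign of every summand *)
have SN : S = - S.
  rewrite {1}/S (reindex_inj (inv_inj flipK)) -sumrN; apply: eq_bigr => x _.
  by rewrite !ffunE eqxx eq_sym (negbTE neq_jk) pm1N mulNr.
lra.
Qed.

Lemma sum_sqr_pm1_comb (n : nat) (c : 'I_n -> R) :
  \sum_(x : {ffun 'I_n -> bool}) (\sum_j c j * pm1 R (x j)) ^+ 2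
  = 2 ^+ n * \sum_j c j ^+ 2.
Proof.
transitivity (\sum_j \sum_k c j * c k *
    \sum_(x : {ffun 'I_n -> bool}) pm1 R (x j) * pm1 R (x k)).
  under eq_bigr do rewrite expr2 mulr_suml.
  rewrite exchange_big; apply: eq_bigr => j _.
  under eq_bigr do rewrite mulr_sumr.
  rewrite exchange_big; apply: eq_bigr => k _.
  by rewrite mulr_sumr; apply: eq_bigr => x _; ring.
rewrite mulr_sumr; apply: eq_bigr => j _.
under eq_bigr do rewrite sum_pm1M.
rewrite (bigD1 j) //= big1 ?addr0 ?eqxx ?mul1r => [|k /negbTE]; first ring.
by rewrite eq_sym => ->; rewrite mul0r mulr0.
Qed.

End Hypercube.

Section StochasticMatrix.
Variables (R : rcfType) (m mP mW : nat).
Variable eta : 'I_m -> {ffun 'I_mW -> bool} * 'I_mP.+1 -> R.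
Hypothesis eta_stoch : left_stochastic eta.

Let eta_ge0 : forall s c, 0 <= eta s c. Proof. by case: eta_stoch. Qed.
Let eta_col : forall c, \sum_(s < m) eta s c = 1. Proof. by case: eta_stoch. Qed.

Let cube_gt0 : 0 < 2 ^+ mW :> R. Proof. by rewrite exprn_gt0. Qed.

Lemma etabar_ge0 (s : 'I_m) (mu : 'I_mP.+1) : 0 <= etabar eta s mu.
Proof. by apply: mulr_ge0; [rewrite invr_ge0 ltW | apply: sumr_ge0]. Qed.

Lemma sum_etabar (mu : 'I_mP.+1) : \sum_s etabar eta s mu = 1.
Proof.
rewrite /etabar -mulr_sumr exchange_big /=.
under eq_bigr do rewrite eta_col.
by rewrite sumr_const card_ffun card_bool card_ord natrX mulVf // lt0r_neq0.
Qed.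

Lemma Emx_contraction (u : 'rV[R]_mW) :
  \sum_i (\sum_j u 0 j * Emx eta i j) ^+ 2 <= \sum_j u 0 j ^+ 2.
Proof.
pose N s := \sum_(x : {ffun 'I_mW -> bool}) eta s (x, ord0).
pose f (x : {ffun 'I_mW -> bool}) := \sum_j u 0 j * pm1 R (x j).
pose g s := (2 ^+ mW)^-1 * \sum_x eta s (x, ord0) * f x ^+ 2.
have g_ge0 s : 0 <= g s.
  apply: mulr_ge0; first by rewrite invr_ge0 ltW.
  by apply: sumr_ge0 => x _; rewrite mulr_ge0 ?sqr_ge0.
have row_le i : (\sum_j u 0 j * Emx eta i j) ^+ 2 <= g (enum_val i).
  set s := enum_val i.
  have N_gt0 : 0 < N s by have := enum_valP i; rewrite inE.
  have mean_f : \sum_x eta s (x, ord0) * f x =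
      \sum_j u 0 j * \sum_(x : {ffun 'I_mW -> bool}) pm1 R (x j) * eta s (x, ord0).
    under eq_bigr do rewrite mulr_sumr.
    rewrite exchange_big; apply: eq_bigr => j _.
    by rewrite mulr_sumr; apply: eq_bigr => x _; ring.
  have -> : \sum_j u 0 j * Emx eta i j =
      (Num.sqrt (2 ^+ mW))^-1 / Num.sqrt (N s) * \sum_x eta s (x, ord0) * f x.
    rewrite mean_f mulr_sumr; apply: eq_bigr => j _.
    by rewrite mxE /= -/s -/(N s); ring.
  rewrite !exprMn !exprVn !sqr_sqrtr ?(ltW cube_gt0) ?(ltW N_gt0) // -mulrA.
  rewrite ler_wpM2l ?invr_ge0 ?(ltW cube_gt0) // mulrC.
  exact: weighted_sqr_mean_le.
apply: (le_trans (ler_sum _ (fun i _ => row_le i))).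
rewrite -(big_enum_val (fun s => g s)) /=.
apply: (@le_trans _ _ (\sum_s g s)); first exact: sumr_sub_le.
rewrite -mulr_sumr exchange_big /=.
under eq_bigr do rewrite -mulr_suml eta_col mul1r.
by rewrite sum_sqr_pm1_comb mulrA mulVf ?mul1r // lt0r_neq0.
Qed.

End StochasticMatrix.

Theorem lemma1 (R : rcfType) (m mP mW : nat)
  (hm : (0 < m)%N) (hP : (0 < mP)%N) (hW : (0 < mW)%N)
  (eta : 'I_m -> {ffun 'I_mW -> bool} * 'I_mP.+1 -> R)
  (Heta : left_stochastic eta) :
  (forall (s : 'I_m) (mu : 'I_mP.+1), s \in SP eta -> (0 < mu)%N ->
      0 <= etabar eta s mu <= 1)
  /\ (forall mu : 'I_mP.+1, (0 < mu)%N -> \sum_(s in SP eta) etabar eta s mu <= 1)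
  /\ (forall sigma : R, singular_value (Emx eta) sigma -> 0 <= sigma <= 1).
Proof.
split; [|split].
- move=> s mu _ _; rewrite etabar_ge0 // -(sum_etabar Heta mu) /=.
  by rewrite (bigD1 s) //= lerDl sumr_ge0 // => t _; apply: etabar_ge0.
- move=> mu _; rewrite -(sum_etabar Heta mu).
  by apply: sumr_sub_le => s; apply: etabar_ge0.
- exact/singular_value_le1/Emx_contraction.
Qed.
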